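(* If a commutative ring $R$ has almost stable range 1, then $R$ is locally stable.
   Context: All rings are commutative with identity. A ring $S$ has stable range 1 if whenever $aS+bS=S$ there is $y\in S$ with $a+by$ a unit. $R$ has almost stable range 1 if every proper homomorphic image $R/I$ with $I\neq 0$ has stable range 1. $R$ is locally stable if whenever $a,b\in R$ with $aR+bR=R$ there is $y\in R$ such that $R/(a+by)R$ has stable range 1. *)

From mathcomp Require Import all_boot all_algebra.
Set Implicit Arguments. Unset Strict Implicit. Unset Printing Implicit Defensive.
Import GRing.Theory.
Local Open Scope ring_scope.

(* Commutative rings with identity (the zero ring allowed): comPzRingType.
   Ideals are Prop-valued predicates; the quotient R/I is handled by working
   modulo I in R ("x = y in R/I" is "x - y \in I"). *)

Definition is_ideal (R : comPzRingType) (I : R -> Prop) : Prop :=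
  [/\ I 0,
      (forall x y, I x -> I y -> I (x + y)) &
      (forall r x, I x -> I (r * x))].

Definition principal (R : comPzRingType) (c : R) : R -> Prop :=
  fun r => exists t, r = c * t.

Definition unit_mod (R : comPzRingType) (I : R -> Prop) (x : R) : Prop :=
  exists z, I (x * z - 1).

(* R/I has stable range 1: whenever aS + bS = S in S = R/I (i.e. a x + b y = 1
   modulo I for some x, y), there is y with a + b y a unit of R/I.
   (Every element of R/I is the class of some element of R.) *)
Definition sr1_mod (R : comPzRingType) (I : R -> Prop) : Prop :=
  forall a b : R, (exists x y, I (a * x + b * y - 1)) ->
    exists y, unit_mod I (a + b * y).

Definition stable_range1 (R : comPzRingType) : Prop :=
  forall a b : R, (exists x y, a * x + b * y = 1) ->
    exists y, exists z, (a + b * y) * z = 1.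

Definition almost_sr1 (R : comPzRingType) : Prop :=
  forall I : R -> Prop, is_ideal I -> (exists x, I x /\ x <> 0) -> sr1_mod I.

Definition locally_stable (R : comPzRingType) : Prop :=
  forall a b : R, (exists x y, a * x + b * y = 1) ->
    exists y, sr1_mod (principal (a + b * y)).

From mathcomp Require Import all_boot all_algebra.
Import GRing.Theory.
Set Implicit Arguments. Unset Strict Implicit. Unset Printing Implicit Defensive.
Local Open Scope ring_scope.

(* If [a + b y] can be made nonzero, [R/(a + b y)R] is a proper homomorphic
   image by a nonzero ideal, so almost stable range 1 applies directly; this
   fails only when [a = b = 0], which with [aR + bR = R] forces [R = 0], where
   every quotient is trivially of stable range 1. *)

Lemma is_ideal_principal (R : comPzRingType) (c : R) : is_ideal (principal c).
Proof.
split.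
- by exists 0; rewrite mulr0.
- by move=> x y [t ->] [s ->]; exists (t + s); rewrite mulrDr.
- by move=> r x [t ->]; exists (r * t); rewrite mulrCA.
Qed.

Lemma sr1_mod_principal (R : comPzRingType) (c : R) :
  almost_sr1 R -> c != 0 -> sr1_mod (principal c).
Proof.
move=> asr1 c_neq0; apply: asr1; first exact: is_ideal_principal.
by exists c; split; [exists 1; rewrite mulr1 | apply/eqP].
Qed.

Lemma sr1_mod_full (R : comPzRingType) (I : R -> Prop) :
  is_ideal I -> I 1 -> sr1_mod I.
Proof.
case=> _ _ I_mul I1 a b _; exists 0, 0.
by rewrite mulr0 add0r -[-1]mulr1; exact: I_mul.
Qed.

Lemma comaximal_neq0 (R : comPzRingType) (a b x y : R) :
  a * x + b * y = 1 -> 1 != 0 :> R -> exists t, a + b * t != 0.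
Proof.
move=> comax one_neq0; have [a0|a_neq0] := eqVneq a 0; last first.
  by exists 0; rewrite mulr0 addr0.
exists 1; rewrite a0 add0r mulr1; apply: contraNneq one_neq0 => b0.
by rewrite -comax a0 b0 !mul0r addr0.
Qed.

Theorem corollary2p2 (R : comPzRingType) : almost_sr1 R -> locally_stable R.
Proof.
move=> asr1 a b [x [y comax]].
have [one0|one_neq0] := eqVneq (1 : R) 0.
  exists 0; apply: sr1_mod_full; first exact: is_ideal_principal.
  by exists 0; rewrite mulr0 -one0.
have [t abt_neq0] := comaximal_neq0 comax one_neq0.
by exists t; exact: sr1_mod_principal.
Qed.
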